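(* Let $R$ be a commutative ring and let $U$ be an Abelian monoid object in the category of (cocommutative, counital) coalgebras over $R$, with addition map $\sigma\colon U\otimes_R U\to U$. Suppose that $U$ admits a good filtration $\{F_sU\}$ such that the zero (unit) of the monoid is the good basepoint associated to this filtration and $\sigma(F_sU\otimes F_tU)\subseteq F_{s+t}U$ for all $s,t\ge0$. Then $U$ is an Abelian group object in the category of coalgebras over $R$.
   Context: In the category of coalgebras over $R$, the product of $U$ and $V$ is $U\otimes_RV$ (with the evident coalgebra structure) and the terminal object is $R$. A good filtration of a coalgebra $U$ (counit $\epsilon$, coproduct $\psi$) is a sequence of submodules $F_sU$, $s\ge0$, such that: (a) $\epsilon\colon F_0U\to R$ is an isomorphism; (b) for $s>0$, $F_sU/F_{s-1}U$ is a finitely generated free $R$-module; (c) $\bigcup_sF_sU=U$; (d) $\psi(F_sU)\subseteq\sum_{s=t+u}F_tU\otimes F_uU$. The associated good basepoint is the coalgebra map $\eta\colon R\xrightarrow{\epsilon^{-1}}F_0U\hookrightarrow U$. *)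

From HB Require Import structures.
From mathcomp Require Import all_boot all_order all_algebra.
From mathcomp Require Import boolp generic_quotient.
Set Implicit Arguments. Unset Strict Implicit. Unset Printing Implicit Defensive.
Import GRing.Theory.
Local Open Scope ring_scope.
Local Open Scope quotient_scope.

(* Tensor product U (x)_R V of two R-modules over a commutative ring R. *)
(* Elements are formal sums  sum c_i (u_i, v_i)  modulo the relation   *)
(* identifying two formal sums when every R-bilinear map (into any     *)
(* R-module) takes the same value on them; this is the usual kernel of *)
(* the presentation of the tensor product.                             *)

Definition islinear (R : pzRingType) (U W : lmodType R) (f : U -> W) :=
  forall (a : R) (x y : U), f (a *: x + y) = a *: f x + f y.

Section Tensor.
Variables (R : comPzRingType) (U V : lmodType R).

Definition bilin (W : lmodType R) (f : U -> V -> W) :=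
  (forall v, islinear (fun u => f u v)) /\ (forall u, islinear (f u)).

Definition fsum := seq (R * U * V).

Definition tev (W : lmodType R) (f : U -> V -> W) (s : fsum) : W :=
  \sum_(x <- s) x.1.1 *: f x.1.2 x.2.

Definition tensor_eqP (s t : fsum) : Prop :=
  forall (W : lmodType R) (f : U -> V -> W), bilin f -> tev f s = tev f t.

Definition tensor_eq (s t : fsum) : bool := `[< tensor_eqP s t >].

Lemma tensor_eq_refl : reflexive tensor_eq.
Proof. by move=> s; apply/asboolP. Qed.
Lemma tensor_eq_sym : symmetric tensor_eq.
Proof.
move=> s t; apply/asboolP/asboolP => H W f bf; by rewrite H.
Qed.
Lemma tensor_eq_trans : transitive tensor_eq.
Proof.
move=> t s u /asboolP H1 /asboolP H2; apply/asboolP => W f bf.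
by rewrite H1 // H2.
Qed.

Canonical tensor_equiv := EquivRel tensor_eq tensor_eq_refl tensor_eq_sym tensor_eq_trans.

Definition tensor := {eq_quot tensor_eq}%qT.
HB.instance Definition _ := EqQuotient.on tensor.
HB.instance Definition _ := Choice.on tensor.

Local Notation pi := (\pi_tensor).

Lemma tensor_piE (s t : fsum) : pi s = pi t <-> tensor_eqP s t.
Proof.
split; first by move/eqP; rewrite eqmodE => /asboolP.
by move=> H; apply/eqP; rewrite eqmodE; apply/asboolP.
Qed.

Lemma tev_cat (W : lmodType R) (f : U -> V -> W) s t : tev f (s ++ t) = tev f s + tev f t.
Proof. by rewrite /tev big_cat. Qed.

Definition fscale (a : R) (s : fsum) : fsum := [seq (a * x.1.1, x.1.2, x.2) | x <- s].

Lemma tev_scale (W : lmodType R) (f : U -> V -> W) a s : tev f (fscale a s) = a *: tev f s.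
Proof.
rewrite /tev big_map scaler_sumr; apply: eq_bigr => x _; by rewrite scalerA.
Qed.

Lemma tev_repr (W : lmodType R) (f : U -> V -> W) s : bilin f -> tev f (repr (pi s)) = tev f s.
Proof.
move=> bf; have: pi (repr (pi s)) = pi s by rewrite reprK.
by move/tensor_piE => /(_ W f bf).
Qed.

Definition tzero : tensor := pi [::].
Definition tadd (x y : tensor) : tensor := pi (repr x ++ repr y).
Definition tscale (a : R) (x : tensor) : tensor := pi (fscale a (repr x)).
Definition topp (x : tensor) : tensor := tscale (-1) x.

Lemma tev_nil (W : lmodType R) (f : U -> V -> W) : tev f [::] = 0.
Proof. by rewrite /tev big_nil. Qed.

Ltac tens := apply/tensor_piE => W f bf;
  do 3 (rewrite ?(tev_cat, tev_scale, tev_nil) ?tev_repr //).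

Lemma taddA : associative tadd.
Proof.
elim/quotW=> x; elim/quotW=> y; elim/quotW=> z; rewrite /tadd; tens.
by rewrite addrA.
Qed.
Lemma taddC : commutative tadd.
Proof. elim/quotW=> x; elim/quotW=> y; rewrite /tadd; tens. by rewrite addrC. Qed.
Lemma tadd0 : left_id tzero tadd.
Proof.
elim/quotW=> x; rewrite /tadd /tzero -[RHS]reprK; tens.
by rewrite add0r.
Qed.
Lemma taddN : left_inverse tzero topp tadd.
Proof.
elim/quotW=> x; rewrite /tadd /topp /tscale /tzero; tens.
by rewrite scaleN1r addNr.
Qed.

HB.instance Definition _ := GRing.isZmodule.Build tensor taddA taddC tadd0 taddN.

Lemma tscaleA a b (x : tensor) : tscale a (tscale b x) = tscale (a * b) x.
Proof.
elim/quotW: x => x; rewrite /tscale; tens.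
by rewrite scalerA.
Qed.
Lemma tscale1 : left_id 1 tscale.
Proof.
elim/quotW=> x; rewrite /tscale -[RHS]reprK; tens.
by rewrite scale1r.
Qed.
Lemma tscaleDr : right_distributive tscale +%R.
Proof.
move=> a; elim/quotW=> x; elim/quotW=> y.
rewrite /GRing.add /= /tadd /tscale; tens.
by rewrite scalerDr.
Qed.
Lemma tscaleDl (x : tensor) : {morph tscale^~ x : a b / a + b}.
Proof.
elim/quotW: x => x a b.
rewrite /GRing.add /= /tadd /tscale; tens.
exact: scalerDl.
Qed.

HB.instance Definition _ :=
  GRing.Zmodule_isLmodule.Build R tensor tscaleA tscale1 tscaleDr tscaleDl.

Definition tmul (u : U) (v : V) : tensor := pi [:: (1, u, v)].

Definition tlift (W : lmodType R) (f : U -> V -> W) (t : tensor) : W :=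
  tev f (repr t).

End Tensor.

Notation "u (x) v" := (tmul u v) (at level 40, left associativity).

Definition tmap (R : comPzRingType) (U V U' V' : lmodType R)
  (f : U -> U') (g : V -> V') : tensor U V -> tensor U' V' :=
  tlift (fun a b => f a (x) g b).

Section Coalgebra.
Variable R : comPzRingType.

Definition is_coalgebra (U : lmodType R) (psi : U -> tensor U U) (eps : U -> R^o) :=
  [/\ islinear psi /\ islinear eps,
      (forall u, tlift (fun a b => eps a *: b) (psi u) = u),
      (forall u, tlift (fun a b => eps b *: a) (psi u) = u),
      (forall u, tlift (fun a b => b (x) a) (psi u) = psi u) &
      (* coassociativity: (1 (x) psi) psi = assoc o (psi (x) 1) psi *)
      (forall u, tlift (fun a b => a (x) psi b) (psi u) =
                 tlift (fun x c => tlift (fun a b => a (x) (b (x) c)) (psi x)) (psi u))].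

Definition is_coalg_map (U V : lmodType R)
  (psiU : U -> tensor U U) (epsU : U -> R^o)
  (psiV : V -> tensor V V) (epsV : V -> R^o) (f : U -> V) :=
  [/\ islinear f, (forall u, psiV (f u) = tmap f f (psiU u)) &
      (forall u, epsV (f u) = epsU u)].

(* the coalgebra structure on U (x) U (the product in the category) *)
Definition tensor_coprod (U : lmodType R) (psi : U -> tensor U U) :
  tensor U U -> tensor (tensor U U) (tensor U U) :=
  tlift (fun a b => tlift (fun a1 a2 => tlift (fun b1 b2 =>
     (a1 (x) b1) (x) (a2 (x) b2)) (psi b)) (psi a)).

Definition tensor_counit (U : lmodType R) (eps : U -> R^o) : tensor U U -> R^o :=
  tlift (fun a b => (eps a * eps b : R^o)).

(* the coalgebra structure on R (the terminal object) *)
Definition unit_coprod (r : R) : tensor R^o R^o := r *: ((1 : R^o) (x) (1 : R^o)).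
Definition unit_counit (r : R^o) : R^o := r.

Definition is_submodule (U : lmodType R) (S : U -> Prop) :=
  S 0 /\ forall (a : R) x y, S x -> S y -> S (a *: x + y).

Definition tspan (U : lmodType R) (P : U -> U -> Prop) (z : tensor U U) :=
  exists l : seq (R * U * U),
    (forall p, p \in l -> P p.1.2 p.2) /\ z = \sum_(p <- l) p.1.1 *: (p.1.2 (x) p.2).

Definition good_filtration (U : lmodType R) (psi : U -> tensor U U) (eps : U -> R^o)
  (F : nat -> U -> Prop) :=
  [/\ (forall s, is_submodule (F s)) /\ (forall s x, F s x -> F s.+1 x),
      (forall r : R, exists! x, F 0 x /\ eps x = r),
      (* (b) F_s U / F_{s-1} U is a finitely generated free R-module *)
      (forall s, (0 < s)%N -> exists n (e : 'I_n -> U),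
          [/\ forall i, F s (e i),
              forall x, F s x -> exists c : 'I_n -> R, F s.-1 (x - \sum_i c i *: e i) &
              forall c : 'I_n -> R, F s.-1 (\sum_i c i *: e i) -> forall i, c i = 0]),
      (forall x, exists s, F s x) &
      (forall s x, F s x ->
         tspan (fun a b => exists t u, [/\ (t + u)%N = s, F t a & F u b]) (psi x))].

End Coalgebra.

(* The inverse [chi] of the identity for the convolution [f ⋆ g = sigma ∘ (f ⊗ g) ∘ psi]
   is a geometric series.  Write [id = eta eps + aug]; since [aug] kills [F_0 U] and
   [psi (F_s U)] lies in the sum of the [F_t U ⊗ F_w U] with [t + w = s], the power
   [aug^(⋆ s+1)] vanishes on [F_s U].  Hence [chi = Σ_k (-1)^k aug^(⋆ k)] is a finite sum on
   each element, and it telescopes to [id ⋆ chi = eta eps].  To see that [chi] is a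
   coalgebra map, note that in the convolution algebra of maps [U -> U ⊗ U] both
   [psi ∘ chi] and [(chi ⊗ chi) ∘ psi] are inverses of [psi]: the first because [psi] is
   multiplicative, the second because cocommutativity gives
   [((f ⋆ g) ⊗ (f ⋆ g)) ∘ psi = ((f ⊗ f) ∘ psi) ⋆ ((g ⊗ g) ∘ psi)]. *)

From mathcomp Require Import all_boot all_order all_algebra.
From mathcomp Require Import boolp classical_sets generic_quotient zify.
Import GRing.Theory.
Local Open Scope ring_scope.

Set Implicit Arguments. Unset Strict Implicit. Unset Printing Implicit Defensive.

Section LinearMaps.
Variable R : pzRingType.
Implicit Types U V W : lmodType R.

Lemma islinear0 U V (f : U -> V) : islinear f -> f 0 = 0.
Proof.
move=> lf; apply: (addrI (f 0)); rewrite addr0.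
by have := lf 1 0 0; rewrite !scale1r addr0 => <-.
Qed.

Lemma islinearD U V (f : U -> V) : islinear f -> forall x y, f (x + y) = f x + f y.
Proof. by move=> lf x y; have := lf 1 x y; rewrite !scale1r. Qed.

Lemma islinearZ U V (f : U -> V) : islinear f -> forall a x, f (a *: x) = a *: f x.
Proof. by move=> lf a x; have := lf a x 0; rewrite addr0 (islinear0 lf) addr0. Qed.

Lemma islinear_sum U V (f : U -> V) : islinear f ->
  forall I (r : seq I) (P : pred I) (F : I -> U),
  f (\sum_(i <- r | P i) F i) = \sum_(i <- r | P i) f (F i).
Proof.
move=> lf I r P F; elim: r => [|i r IH]; first by rewrite !big_nil islinear0.
by rewrite !big_cons; case: (P i); rewrite ?islinearD ?IH.
Qed.

Lemma islinearN U V (f : U -> V) : islinear f -> forall x, f (- x) = - f x.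
Proof. by move=> lf x; rewrite -scaleN1r islinearZ // scaleN1r. Qed.

Lemma islinear_id U : islinear (fun x : U => x).
Proof. by []. Qed.

Lemma islinear_zero U V : islinear (fun _ : U => 0 : V).
Proof. by move=> a x y; rewrite scaler0 addr0. Qed.

Lemma islinear_comp U V W (g : V -> W) (f : U -> V) :
  islinear g -> islinear f -> islinear (fun x => g (f x)).
Proof. by move=> lg lf a x y; rewrite lf lg. Qed.

Lemma islinear_add U V (f g : U -> V) :
  islinear f -> islinear g -> islinear (fun x => f x + g x).
Proof. by move=> lf lg a x y; rewrite lf lg scalerDr addrACA. Qed.

Lemma islinear_opp U V (f : U -> V) : islinear f -> islinear (fun x => - f x).
Proof. by move=> lf a x y; rewrite lf opprD scalerN. Qed.

End LinearMaps.

Section ComLinearMaps.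
Variable R : comPzRingType.

Lemma islinear_scaler (U : lmodType R) (c : R) : islinear (fun x : U => c *: x).
Proof. by move=> a x y; rewrite scalerDr !scalerA mulrC. Qed.

Lemma islinear_scalel (U V : lmodType R) (f : U -> R^o) (v : V) :
  islinear f -> islinear (fun x => f x *: v).
Proof. by move=> lf a x y; rewrite lf scalerDl scalerA. Qed.

Lemma bilin_mul : bilin (fun a b : R^o => a * b).
Proof.
split=> [b|a] c x y; rewrite /GRing.scale /=; first by rewrite mulrDl mulrA.
by rewrite mulrDr mulrCA.
Qed.

Lemma bilinL (U V W : lmodType R) (f : U -> V -> W) :
  bilin f -> forall v, islinear (fun u => f u v).
Proof. by case. Qed.

Lemma bilinR (U V W : lmodType R) (f : U -> V -> W) : bilin f -> forall u, islinear (f u).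
Proof. by case. Qed.

Lemma islinear_bilinl (U V W X : lmodType R) (m : U -> V -> W) (f : X -> U) (y : V) :
  bilin m -> islinear f -> islinear (fun p => m (f p) y).
Proof. by move=> [ml _] lf; exact: islinear_comp (ml y) lf. Qed.

Lemma islinear_bilinr (U V W X : lmodType R) (m : U -> V -> W) (x : U) (f : X -> V) :
  bilin m -> islinear f -> islinear (fun p => m x (f p)).
Proof. by move=> [_ mr] lf; exact: islinear_comp (mr x) lf. Qed.

End ComLinearMaps.

Section TensorLift.
Local Open Scope quotient_scope.
Variables (R : comPzRingType) (U V : lmodType R).
Implicit Types W : lmodType R.
Local Notation pi := (\pi_(tensor U V)).

Lemma tlift_pi W (f : U -> V -> W) s : bilin f -> tlift f (pi s) = tev f s.
Proof. by move=> bf; rewrite /tlift tev_repr. Qed.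

Lemma tlift_linear W (f : U -> V -> W) : bilin f -> islinear (tlift f).
Proof.
move=> bf a x y; rewrite /tlift {1}/GRing.add /= /tadd /GRing.scale /= /tscale.
by rewrite tev_repr // tev_cat tev_repr // tev_scale.
Qed.

Lemma tmul_bilin : bilin (@tmul R U V).
Proof.
split=> [v|u] a x y; rewrite /GRing.add /= /tadd /GRing.scale /= /tscale /tmul;
  apply/tensor_piE => W f [fl fr];
  rewrite tev_cat !tev_repr // tev_scale tev_repr // /tev !big_seq1 /= !scale1r;
  [exact: fl | exact: fr].
Qed.

Lemma tmul0l (v : V) : (0 : U) (x) v = 0.
Proof. exact (islinear0 (proj1 tmul_bilin v)). Qed.

Lemma tmul0r (u : U) : u (x) (0 : V) = 0.
Proof. exact (islinear0 (proj2 tmul_bilin u)). Qed.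

Lemma tlift_tmul W (f : U -> V -> W) u v : bilin f -> tlift f (u (x) v) = f u v.
Proof. by move=> bf; rewrite /tmul tlift_pi // /tev big_seq1 /= scale1r. Qed.

Lemma tlift_comp W W' (f : U -> V -> W) (g : W -> W') t :
  islinear g -> g (tlift f t) = tlift (fun a b => g (f a b)) t.
Proof.
move=> lg; rewrite /tlift /tev islinear_sum //.
by apply: eq_bigr => x _; rewrite islinearZ.
Qed.

Lemma eq_tlift W (f g : U -> V -> W) t :
  (forall a b, f a b = g a b) -> tlift f t = tlift g t.
Proof. by move=> fg; congr tlift; apply/funext => a; apply/funext => b. Qed.

Lemma tlift_fun_add W (f g : U -> V -> W) t :
  tlift (fun a b => f a b + g a b) t = tlift f t + tlift g t.
Proof. by rewrite /tlift /tev -big_split; apply: eq_bigr => x _; rewrite scalerDr. Qed.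

Lemma tlift_fun_sum W I (r : seq I) (c : I -> R) (F : I -> U -> V -> W) t :
  tlift (fun a b => \sum_(i <- r) c i *: F i a b) t = \sum_(i <- r) c i *: tlift (F i) t.
Proof.
rewrite /tlift /tev; under eq_bigr do rewrite scaler_sumr.
rewrite exchange_big; apply: eq_bigr => i _; rewrite scaler_sumr.
by apply: eq_bigr => x _; rewrite !scalerA mulrC.
Qed.

Lemma tlift_funZ W (c : R) (f : U -> V -> W) t :
  tlift (fun a b => c *: f a b) t = c *: tlift f t.
Proof.
by rewrite /tlift /tev scaler_sumr; apply: eq_bigr => x _; rewrite !scalerA mulrC.
Qed.

Lemma islinear_tlift_fun W (X : lmodType R) (h : X -> U -> V -> W) t :
  (forall a b, islinear (fun p => h p a b)) -> islinear (fun p => tlift (h p) t).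
Proof.
move=> lh c x y; rewrite -tlift_funZ -tlift_fun_add.
by apply: eq_tlift => a b; rewrite lh.
Qed.

Lemma tlift_fun0 W t : tlift (fun (a : U) (b : V) => 0 : W) t = 0.
Proof. by rewrite /tlift /tev big1 // => x _; rewrite scaler0. Qed.

Lemma tensor_sum s : pi s = \sum_(x <- s) x.1.1 *: (x.1.2 (x) x.2).
Proof.
elim: s => [|x s IH]; first by rewrite big_nil.
rewrite big_cons -IH /GRing.add /= /tadd /GRing.scale /= /tscale /tmul.
apply/tensor_piE => W f bf; rewrite tev_cat !tev_repr // tev_scale tev_repr //.
by rewrite /tev big_cons big_seq1 /= scale1r.
Qed.

Lemma tlift_tmul_id t : tlift (@tmul R U V) t = t.
Proof. by elim/quotW: t => s; rewrite tlift_pi ?tensor_sum //; exact: tmul_bilin. Qed.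

Lemma tensor_linear_ext W (g h : tensor U V -> W) :
  islinear g -> islinear h -> (forall u v, g (u (x) v) = h (u (x) v)) -> forall t, g t = h t.
Proof.
by move=> lg lh gh t; rewrite -(tlift_tmul_id t) !tlift_comp //; exact: eq_tlift.
Qed.

End TensorLift.

Global Hint Resolve tmul_bilin bilin_mul : core.

Ltac linearity :=
  repeat match goal with |- forall _, _ => intro end; cbv beta;
  match goal with
  | |- bilin _ => first [solve [eauto] | split; intros; linearity]
  | |- islinear (fun p => p) => exact: islinear_id
  | |- islinear (fun _ => 0) => exact: islinear_zero
  | |- islinear (fun p => tlift ?F p) => apply: tlift_linear; linearity
  | |- islinear (tlift _) => apply: tlift_linear; linearity
  | |- islinear (fun p => tlift _ _) => apply: islinear_tlift_fun; intros; linearity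
  | |- islinear (fun p => (@?f p) + (@?g p)) => apply: islinear_add; linearity
  | |- islinear (fun p => - (@?f p)) => apply: islinear_opp; linearity
  | |- islinear (fun p => ?c *: (@?f p)) =>
      apply: (islinear_comp (islinear_scaler _ c)); linearity
  | |- islinear (fun p => (@?f p) *: ?v) => apply: islinear_scalel; linearity
  | |- islinear (fun p => ?m (@?f p) ?y) =>
      eapply (islinear_bilinl (m := m)); [solve [eauto] | linearity]
  | |- islinear (fun p => ?m ?x (@?f p)) =>
      eapply (islinear_bilinr (m := m)); [solve [eauto] | linearity]
  | |- islinear (fun p => ?g (@?f p)) => eapply (islinear_comp (g := g)); linearity
  | |- _ => first [solve [eauto] | solve [eapply bilinR; eauto] | solve [eapply bilinL; eauto]]
  end.

Section TensorMul.
Variables (R : comPzRingType) (A : lmodType R) (m : A -> A -> A).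
Hypothesis m_bilin : bilin m.

Definition tensor_mul (t t' : tensor A A) : tensor A A :=
  tlift (fun a b => tlift (fun c d => m a c (x) m b d) t') t.

Lemma tensor_mul_bilin : bilin tensor_mul.
Proof. rewrite /tensor_mul; linearity. Qed.
Local Hint Resolve tensor_mul_bilin : core.

Lemma tensor_mul_tmul a b c d : tensor_mul (a (x) b) (c (x) d) = m a c (x) m b d.
Proof. by rewrite /tensor_mul !tlift_tmul //; linearity. Qed.

Lemma tensor_mulA : associative m -> associative tensor_mul.
Proof.
move=> mA t1 t2 t3; move: t1; apply: tensor_linear_ext; [linearity | linearity | move=> a b].
move: t2; apply: tensor_linear_ext; [linearity | linearity | move=> c d].
move: t3; apply: tensor_linear_ext; [linearity | linearity | move=> p q].
by rewrite !tensor_mul_tmul !mA.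
Qed.

Lemma tensor_mul1l (one : A) : left_id one m -> left_id (one (x) one) tensor_mul.
Proof.
move=> m1 t; move: t; apply: tensor_linear_ext; [linearity | linearity | move=> a b].
by rewrite tensor_mul_tmul !m1.
Qed.

Lemma tensor_mul1r (one : A) : right_id one m -> right_id (one (x) one) tensor_mul.
Proof.
move=> m1 t; move: t; apply: tensor_linear_ext; [linearity | linearity | move=> a b].
by rewrite tensor_mul_tmul !m1.
Qed.

End TensorMul.

Section Coalgebra.
Variables (R : comPzRingType) (C : lmodType R) (psi : C -> tensor C C) (eps : C -> R^o).
Hypothesis coalg : is_coalgebra psi eps.
Implicit Types W : lmodType R.

Lemma coalg_psi_linear : islinear psi. Proof. by case: coalg => -[]. Qed.
Lemma coalg_eps_linear : islinear eps. Proof. by case: coalg => -[]. Qed.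
Local Hint Resolve coalg_psi_linear coalg_eps_linear : core.

Lemma counitl W (g : C -> W) u :
  islinear g -> tlift (fun a b => eps a *: g b) (psi u) = g u.
Proof.
move=> lg; case: coalg => _ cl _ _ _; rewrite -{2}(cl u) tlift_comp //.
by apply: eq_tlift => a b; rewrite islinearZ.
Qed.

Lemma counitr W (g : C -> W) u :
  islinear g -> tlift (fun a b => eps b *: g a) (psi u) = g u.
Proof.
move=> lg; case: coalg => _ _ cr _ _; rewrite -{2}(cr u) tlift_comp //.
by apply: eq_tlift => a b; rewrite islinearZ.
Qed.

Lemma cocomm W (f : C -> C -> W) u :
  bilin f -> tlift f (psi u) = tlift (fun a b => f b a) (psi u).
Proof.
move=> bf; case: coalg => _ _ _ cc _; rewrite -{1}cc tlift_comp; last exact: tlift_linear.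
by apply: eq_tlift => a b; rewrite tlift_tmul.
Qed.

Lemma coassoc W (h : C -> C -> C -> W) u :
  (forall a, bilin (h a)) -> (forall b c, islinear (fun a => h a b c)) ->
  tlift (fun a b => tlift (h a) (psi b)) (psi u) =
  tlift (fun x c => tlift (fun a b => h a b c) (psi x)) (psi u).
Proof.
move=> h23 h1; case: coalg => _ _ _ _ ca.
have bH : bilin (fun (a : C) (t : tensor C C) => tlift (h a) t) by linearity.
pose H := tlift (fun (a : C) (t : tensor C C) => tlift (h a) t).
have lH : islinear H := tlift_linear bH.
have := congr1 H (ca u); rewrite /H !tlift_comp //.
rewrite (eq_tlift (g := fun a b => tlift (h a) (psi b))) => [->|a b]; last first.
  by rewrite tlift_tmul.
apply: eq_tlift => x c; rewrite tlift_comp //.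
by apply: eq_tlift => a b; rewrite !tlift_tmul //; linearity.
Qed.

Definition comul22 W (h : C -> C -> C -> C -> W) (u : C) : W :=
  tlift (fun x y => tlift (fun x1 x2 => tlift (fun y1 y2 => h x1 x2 y1 y2) (psi y)) (psi x))
    (psi u).

Lemma comul22_swap W (h : C -> C -> C -> C -> W) u :
  (forall b c d, islinear (fun a => h a b c d)) ->
  (forall a c d, islinear (fun b => h a b c d)) ->
  (forall a b d, islinear (fun c => h a b c d)) ->
  (forall a b c, islinear (fun d => h a b c d)) ->
  comul22 h u = comul22 (fun a b c d => h a c b d) u.
Proof.
move=> h1 h2 h3 h4.
have comul22_assoc k : (forall b c d, islinear (fun a => k a b c d)) ->
    (forall a c d, islinear (fun b => k a b c d)) ->
    (forall a b d, islinear (fun c => k a b c d)) ->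
    (forall a b c, islinear (fun d => k a b c d)) ->
    comul22 k u = tlift (fun a b => tlift (fun b1 b2 =>
                    tlift (fun c d => k a c d b2) (psi b1)) (psi b)) (psi u).
  move=> k1 k2 k3 k4; rewrite /comul22.
  rewrite -(coassoc (h := fun x1 x2 y => tlift (fun y1 y2 => k x1 x2 y1 y2) (psi y)));
    try by linearity.
  apply: eq_tlift => a b.
  by rewrite (coassoc (h := k a)); linearity.
rewrite !comul22_assoc //; apply: eq_tlift => a b; apply: eq_tlift => b1 b2.
by rewrite cocomm //; linearity.
Qed.

Definition conv (A : lmodType R) (m : A -> A -> A) (f g : C -> A) (u : C) : A :=
  tlift (fun a b => m (f a) (g b)) (psi u).

Definition conv_one (A : lmodType R) (one : A) (u : C) : A := eps u *: one.

Lemma conv_comp (A B : lmodType R) (mA : A -> A -> A) (mB : B -> B -> B) (phi : A -> B) f g :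
  islinear phi -> (forall a b, phi (mA a b) = mB (phi a) (phi b)) ->
  (fun u => phi (conv mA f g u)) = conv mB (fun u => phi (f u)) (fun u => phi (g u)).
Proof.
by move=> lphi phiM; apply/funext => u; rewrite /conv tlift_comp //; apply: eq_tlift.
Qed.

Lemma tmap_conv_one (A B : lmodType R) (x : A) (y : B) u :
  tmap (conv_one x) (conv_one y) (psi u) = conv_one (x (x) y) u.
Proof.
rewrite /tmap /conv_one -(counitl (g := fun b => (eps b : R) *: (x (x) y))); last by linearity.
have [tl tr] := tmul_bilin A B.
by apply: eq_tlift => a b; rewrite (islinearZ (tl _)) (islinearZ (tr _)).
Qed.

Section Convolution.
Variables (A : lmodType R) (m : A -> A -> A).
Hypothesis m_bilin : bilin m.
Local Hint Resolve m_bilin : core.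

Lemma conv_linear f g : islinear f -> islinear g -> islinear (conv m f g).
Proof. by move=> lf lg; rewrite /conv; linearity. Qed.

Lemma conv1l one g : left_id one m -> islinear g -> conv m (conv_one one) g = g.
Proof.
move=> m1 lg; apply/funext => u; rewrite /conv /conv_one -[RHS](counitl u lg).
by apply: eq_tlift => a b; rewrite (islinearZ (bilinL m_bilin _)) m1.
Qed.

Lemma conv1r one f : right_id one m -> islinear f -> conv m f (conv_one one) = f.
Proof.
move=> m1 lf; apply/funext => u; rewrite /conv /conv_one -[RHS](counitr u lf).
by apply: eq_tlift => a b; rewrite (islinearZ (bilinR m_bilin _)) m1.
Qed.

Lemma convA f g h : associative m -> islinear f -> islinear g -> islinear h ->
  conv m (conv m f g) h = conv m f (conv m g h).
Proof.
move=> mA lf lg lh; apply/funext => u; rewrite /conv.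
under eq_tlift do rewrite (tlift_comp _ _ (bilinL m_bilin _)).
rewrite -coassoc; try by linearity.
apply: eq_tlift => a b; rewrite (tlift_comp _ _ (bilinR m_bilin _)).
by apply: eq_tlift => c d; rewrite mA.
Qed.

Lemma convC f g : commutative m -> islinear f -> islinear g -> conv m f g = conv m g f.
Proof.
move=> mC lf lg; apply/funext => u; rewrite /conv cocomm; last by linearity.
by apply: eq_tlift => a b; rewrite mC.
Qed.

Lemma conv_addl f g h u :
  conv m (fun x => f x + g x) h u = conv m f h u + conv m g h u.
Proof.
rewrite /conv -tlift_fun_add; apply: eq_tlift => a b.
exact: islinearD (bilinL m_bilin _) _ _.
Qed.

Lemma conv_sumr I (r : seq I) (c : I -> R) f (G : I -> C -> A) u :
  conv m f (fun x => \sum_(i <- r) c i *: G i x) u = \sum_(i <- r) c i *: conv m f (G i) u.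
Proof.
rewrite /conv -tlift_fun_sum; apply: eq_tlift => a b.
have mr := bilinR m_bilin (f a).
by rewrite (islinear_sum mr); apply: eq_bigr => i _; rewrite (islinearZ mr).
Qed.

Lemma conv_inverse_unique one f p q : associative m -> left_id one m -> right_id one m ->
  islinear f -> islinear p -> islinear q ->
  conv m f p = conv_one one -> conv m q f = conv_one one -> p = q.
Proof.
move=> mA m1l m1r lf lp lq fp qf.
by rewrite -(conv1l m1l lp) -qf convA // fp conv1r.
Qed.

Lemma tmap_conv f g : islinear f -> islinear g ->
  (fun u => tmap (conv m f g) (conv m f g) (psi u)) =
  conv (tensor_mul m) (fun u => tmap f f (psi u)) (fun u => tmap g g (psi u)).
Proof.
move=> lf lg; apply/funext => u.
have tm_bilin := tensor_mul_bilin m_bilin.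
transitivity (comul22 (fun p q r s => m (f p) (g q) (x) m (f r) (g s)) u).
  rewrite /tmap /comul22 /conv; apply: eq_tlift => x y.
  rewrite (tlift_comp _ _ (bilinL (tmul_bilin A A) _)); apply: eq_tlift => x1 x2.
  by rewrite (tlift_comp _ _ (bilinR (tmul_bilin A A) _)).
rewrite comul22_swap; try by linearity.
rewrite /comul22 /conv /tmap; apply: eq_tlift => x y.
rewrite (tlift_comp _ _ (bilinL tm_bilin _)); apply: eq_tlift => a b.
rewrite (tlift_comp _ _ (bilinR tm_bilin _)); apply: eq_tlift => c d.
by rewrite tensor_mul_tmul.
Qed.

End Convolution.
End Coalgebra.

Lemma sum_alternating_telescope (R : pzRingType) (V : lmodType R) (x : nat -> V) m :
  \sum_(0 <= k < m) (-1) ^+ k *: (x k + x k.+1) = x 0%N + (-1) ^+ m.+1 *: x m.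
Proof.
elim: m => [|m IH]; first by rewrite big_nil expr1 scaleN1r subrr.
rewrite big_nat_recr //= IH -addrA; congr (_ + _).
by rewrite !exprS !mulN1r !scaleNr opprK scalerDr addrA addNr add0r.
Qed.

Section Antipode.
Variables (R : comPzRingType) (C : lmodType R) (psi : C -> tensor C C) (eps : C -> R^o).
Variables (sigma : tensor C C -> C) (eta : R^o -> C) (F : nat -> C -> Prop).
Hypothesis coalg : is_coalgebra psi eps.
Hypothesis sigma_coalg : is_coalg_map (tensor_coprod psi) (tensor_counit eps) psi eps sigma.
Hypothesis eta_coalg : @is_coalg_map R R^o C (@unit_coprod R) (@unit_counit R) psi eps eta.
Hypothesis sigmaA : forall a b c, sigma (sigma (a (x) b) (x) c) = sigma (a (x) sigma (b (x) c)).
Hypothesis sigmaC : forall a b, sigma (a (x) b) = sigma (b (x) a).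
Hypothesis sigma1 : forall a, sigma (eta 1 (x) a) = a.
Hypothesis F_good : good_filtration psi eps F.
Hypothesis F0_eta : forall r : R, F 0 (eta r).

Let psi_linear := coalg_psi_linear coalg.
Let eps_linear := coalg_eps_linear coalg.
Lemma sigma_linear : islinear sigma. Proof. by case: sigma_coalg. Qed.
Lemma eta_linear : islinear eta. Proof. by case: eta_coalg. Qed.
Local Hint Resolve psi_linear eps_linear sigma_linear eta_linear : core.

Definition sigma_mul (a b : C) : C := sigma (a (x) b).

Lemma sigma_mul_bilin : bilin sigma_mul. Proof. rewrite /sigma_mul; linearity. Qed.
Local Hint Resolve sigma_mul_bilin : core.

Lemma sigma_mulA : associative sigma_mul. Proof. by move=> a b c; rewrite /sigma_mul sigmaA. Qed.
Lemma sigma_mulC : commutative sigma_mul. Proof. by move=> a b; exact: sigmaC. Qed.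
Lemma sigma_mul1l : left_id (eta 1) sigma_mul. Proof. exact: sigma1. Qed.
Lemma sigma_mul1r : right_id (eta 1) sigma_mul.
Proof. by move=> a; rewrite sigma_mulC sigma_mul1l. Qed.

Lemma psi_sigma_mul a b : psi (sigma_mul a b) = tensor_mul sigma_mul (psi a) (psi b).
Proof.
rewrite /sigma_mul; case: sigma_coalg => _ -> _.
rewrite /tensor_coprod tlift_tmul; last by linearity.
rewrite /tmap tlift_comp; last by linearity.
apply: eq_tlift => a1 a2; rewrite tlift_comp; last by linearity.
by apply: eq_tlift => b1 b2; rewrite tlift_tmul //; linearity.
Qed.

Lemma eps_sigma_mul a b : eps (sigma_mul a b) = eps a * eps b.
Proof.
by rewrite /sigma_mul; case: sigma_coalg => _ _ ->; rewrite /tensor_counit tlift_tmul //; linearity.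
Qed.

Lemma eps_eta r : eps (eta r) = r. Proof. by case: eta_coalg => _ _ ->. Qed.

Lemma psi_eta1 : psi (eta 1) = eta 1 (x) eta 1.
Proof.
case: eta_coalg => _ -> _.
rewrite /unit_coprod /tmap (islinearZ (tlift_linear _)); last by linearity.
by rewrite scale1r tlift_tmul //; linearity.
Qed.

Local Notation "f ⋆ g" := (conv psi sigma_mul f g) (at level 40, left associativity).
Local Notation eta_eps := (conv_one eps (eta 1)).

Lemma eta_epsE u : eta (eps u) = eta_eps u.
Proof. by rewrite /conv_one -(islinearZ eta_linear) /GRing.scale /= mulr1. Qed.

Definition aug (u : C) : C := u - eta_eps u.

Definition aug_pow (k : nat) : C -> C := iter k (fun g => aug ⋆ g) eta_eps.

Lemma eps_eta_eps u : eps (eta_eps u) = eps u.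
Proof. by rewrite -eta_epsE eps_eta. Qed.

Lemma aug_linear : islinear aug. Proof. rewrite /aug /conv_one; linearity. Qed.
Local Hint Resolve aug_linear : core.

Lemma aug_pow_linear k : islinear (aug_pow k).
Proof.
elim: k => [|k IH] /=; first by rewrite /conv_one; linearity.
exact (conv_linear coalg sigma_mul_bilin aug_linear IH).
Qed.
Local Hint Resolve aug_pow_linear : core.

Lemma F_mono s t x : (s <= t)%N -> F s x -> F t x.
Proof.
case: F_good => -[_ FS] _ _ _ _ /subnKC <-; elim: (t - s)%N => [|n IH] Fx.
  by rewrite addn0.
by rewrite addnS; apply/FS/IH.
Qed.

Lemma F_lin_comb s t c x y : F s x -> F t y -> F (maxn s t) (c *: x + y).
Proof.
case: F_good => -[Fsub _] _ _ _ _ Fx Fy; apply: (Fsub _).2.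
  by apply: F_mono Fx; rewrite leq_maxl.
by apply: F_mono Fy; rewrite leq_maxr.
Qed.

Lemma F0_eta_eps x : F 0 x -> x = eta_eps x.
Proof.
case: F_good => _ F0_iso _ _ _ Fx; have [y [_ y_uniq]] := F0_iso (eps x).
by rewrite -eta_epsE -(y_uniq x) ?(y_uniq (eta (eps x))) ?eps_eta.
Qed.

Lemma aug_F0 x : F 0 x -> aug x = 0.
Proof. by move=> /F0_eta_eps Fx; rewrite /aug -Fx subrr. Qed.

Lemma psi_filtered_eq (W : lmodType R) (f f' : C -> C -> W) s u : bilin f -> bilin f' -> F s u ->
  (forall t w a b, (t + w)%N = s -> F t a -> F w b -> f a b = f' a b) ->
  tlift f (psi u) = tlift f' (psi u).
Proof.
move=> bf bf' Fu ff'; case: F_good => _ _ _ _ /(_ s u Fu) [l [Fl ->]].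
rewrite !(islinear_sum (tlift_linear _)) //; apply: eq_big_seq => p /Fl [t [w [tw Fa Fb]]].
by rewrite !(islinearZ (tlift_linear _)) // !tlift_tmul // (ff' t w).
Qed.

Lemma aug_pow_vanish k n u : F n u -> (n < k)%N -> aug_pow k u = 0.
Proof.
elim: k n u => // k IH n u Fu ltnk /=.
rewrite /conv (psi_filtered_eq (f' := fun _ _ => 0) _ _ Fu) ?tlift_fun0 //; try by linearity.
move=> [|t] w a b tw Fa Fb.
  by rewrite aug_F0 // /sigma_mul tmul0l (islinear0 sigma_linear).
rewrite (IH w) /sigma_mul ?tmul0r ?(islinear0 sigma_linear) //; lia.
Qed.

Definition filt_deg (u : C) : nat := xget 0%N (fun s => F s u).

Lemma filt_degP u : F (filt_deg u) u.
Proof. by case: F_good => _ _ _ Fex _; exact (xgetPex 0%N (Fex u)). Qed.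

Definition antipode_trunc (m : nat) (u : C) : C := \sum_(0 <= k < m) (-1) ^+ k *: aug_pow k u.

Definition antipode (u : C) : C := antipode_trunc (filt_deg u).+1 u.

Lemma antipode_trunc_stable n m u : F n u -> (n < m)%N ->
  antipode_trunc m u = antipode_trunc n.+1 u.
Proof.
move=> Fu ltnm; rewrite /antipode_trunc (big_cat_nat (leq0n n.+1) ltnm) /=.
rewrite [X in _ + X]big1_seq ?addr0 // => k /andP[_]; rewrite mem_index_iota => /andP[ltnk _].
by rewrite (aug_pow_vanish Fu) ?scaler0.
Qed.

Lemma antipodeE n m u : F n u -> (n < m)%N -> antipode u = antipode_trunc m u.
Proof.
move=> Fu ltnm; pose M := maxn (filt_deg u).+1 n.+1.
rewrite /antipode (antipode_trunc_stable Fu ltnm).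
rewrite -(antipode_trunc_stable (filt_degP u) (leq_maxl _ _ : (_ < M)%N)).
by rewrite (antipode_trunc_stable Fu (leq_maxr _ _ : (_ < M)%N)).
Qed.

Lemma antipode_trunc_linear m : islinear (antipode_trunc m).
Proof.
move=> c x y; rewrite /antipode_trunc scaler_sumr -big_split; apply: eq_bigr => k _.
by rewrite aug_pow_linear scalerDr !scalerA mulrC.
Qed.
Local Hint Resolve antipode_trunc_linear : core.

Lemma antipode_linear : islinear antipode.
Proof.
move=> c x y; pose n := maxn (filt_deg x) (filt_deg y).
have Fz := F_lin_comb c (filt_degP x) (filt_degP y).
rewrite (antipodeE Fz (ltnSn n)) antipode_trunc_linear.
rewrite (antipodeE (m := n.+1) (filt_degP x)) ?ltnS ?leq_maxl //.
by rewrite (antipodeE (m := n.+1) (filt_degP y)) ?ltnS ?leq_maxr.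
Qed.
Local Hint Resolve antipode_linear : core.

Lemma conv_id_split g u : islinear g -> ((fun x => x) ⋆ g) u = g u + (aug ⋆ g) u.
Proof.
move=> lg; have -> : (fun x => x) = (fun x => eta_eps x + aug x).
  by apply/funext => x; rewrite /aug addrC subrK.
by rewrite conv_addl // conv1l // sigma_mul1l.
Qed.

Lemma conv_id_antipode : (fun x => x) ⋆ antipode = eta_eps.
Proof.
apply/funext => u; pose s := filt_deg u; have Fu : F s u := filt_degP u.
rewrite {1}/conv (psi_filtered_eq (f' := fun a b => sigma_mul a (antipode_trunc s.+1 b)) _ _ Fu);
  [| by linearity | by linearity |]; last first.
  by move=> t w a b tw _ Fb; rewrite (antipodeE (m := s.+1) Fb) // ltnS -tw leq_addl.
rewrite -/(((fun x => x) ⋆ antipode_trunc s.+1) u) /antipode_trunc conv_sumr //.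
under eq_bigr do rewrite conv_id_split //.
by rewrite sum_alternating_telescope (aug_pow_vanish (k := s.+1) Fu) // scaler0 addr0.
Qed.

Lemma eps_aug x : eps (aug x) = 0.
Proof.
by rewrite /aug (islinearD eps_linear) (islinearN eps_linear) eps_eta_eps subrr.
Qed.

Lemma eps_conv_aug g u : islinear g -> eps ((aug ⋆ g) u) = 0.
Proof.
move=> lg; rewrite /conv tlift_comp // (eq_tlift (g := fun _ _ => 0)) ?tlift_fun0 // => a b.
by rewrite eps_sigma_mul eps_aug mul0r.
Qed.

Lemma eps_antipode u : eps (antipode u) = eps u.
Proof.
rewrite /antipode /antipode_trunc (islinear_sum eps_linear) big_ltn //.
rewrite (islinearZ eps_linear) expr0 scale1r eps_eta_eps big1_seq ?addr0 //.
move=> k /andP[_]; rewrite mem_index_iota; case: k => // k _.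
by rewrite (islinearZ eps_linear) eps_conv_aug // scaler0.
Qed.

Local Notation "f ⊛ g" := (conv psi (tensor_mul sigma_mul) f g) (at level 40).
Local Notation eta_eps2 := (conv_one eps (eta 1 (x) eta 1)).

Lemma psi_conv f g : (fun u => psi ((f ⋆ g) u)) = (fun u => psi (f u)) ⊛ (fun u => psi (g u)).
Proof. exact: conv_comp psi_linear psi_sigma_mul. Qed.

Lemma psi_conv_psi_antipode : psi ⊛ (fun u => psi (antipode u)) = eta_eps2.
Proof.
have psi_eta_eps : (fun u => psi (eta_eps u)) = eta_eps2.
  by apply/funext => x; rewrite /conv_one (islinearZ psi_linear) psi_eta1.
by rewrite -psi_eta_eps -conv_id_antipode psi_conv.
Qed.

Lemma tmap_antipode_conv_psi : (fun u => tmap antipode antipode (psi u)) ⊛ psi = eta_eps2.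
Proof.
rewrite -(funext (tmap_conv_one coalg (eta 1) (eta 1))) -conv_id_antipode.
rewrite (convC coalg sigma_mul_bilin sigma_mulC) ?(tmap_conv coalg sigma_mul_bilin) //;
  try exact: islinear_id.
by congr conv; apply/funext => x; rewrite /tmap tlift_tmul_id.
Qed.

Lemma psi_antipode u : psi (antipode u) = tmap antipode antipode (psi u).
Proof.
have lP : islinear (fun u => psi (antipode u)) by linearity.
have lQ : islinear (fun u => tmap antipode antipode (psi u)) by rewrite /tmap; linearity.
have := conv_inverse_unique coalg (tensor_mul_bilin sigma_mul_bilin)
  (tensor_mulA sigma_mul_bilin sigma_mulA) (tensor_mul1l sigma_mul_bilin sigma_mul1l)
  (tensor_mul1r sigma_mul_bilin sigma_mul1r) psi_linear lP lQ
  psi_conv_psi_antipode tmap_antipode_conv_psi.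
by move/(congr1 (fun h => h u)).
Qed.

Lemma sigma_id_antipode u : sigma (tmap id antipode (psi u)) = eta (eps u).
Proof. by rewrite eta_epsE -conv_id_antipode /tmap tlift_comp. Qed.

End Antipode.

Unset Implicit Arguments.

Theorem proposition6p12 (R : comPzRingType) (U : lmodType R)
  (psi : U -> tensor U U) (eps : U -> R^o)
  (sigma : tensor U U -> U) (eta : R^o -> U) (F : nat -> U -> Prop) :
  (* U is a (coassociative, counital, cocommutative) coalgebra *)
  is_coalgebra psi eps ->
  (* Abelian monoid object in coalgebras: sigma and eta are coalgebra maps, *)
  is_coalg_map (tensor_coprod psi) (tensor_counit eps) psi eps sigma ->
  @is_coalg_map R R^o U (@unit_coprod R) (@unit_counit R) psi eps eta ->
  (* ... associative, commutative, with unit eta *)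
  (forall a b c, sigma (sigma (a (x) b) (x) c) = sigma (a (x) sigma (b (x) c))) ->
  (forall a b, sigma (a (x) b) = sigma (b (x) a)) ->
  (forall a, sigma (eta 1 (x) a) = a) ->
  (* good filtration whose good basepoint is the zero eta *)
  good_filtration psi eps F ->
  (forall r : R, F 0%N (eta r) /\ eps (eta r) = r) ->
  (* sigma (F_s U (x) F_t U) is contained in F_(s+t) U *)
  (forall (s t : nat) a b, F s a -> F t b -> F (s + t)%N (sigma (a (x) b))) ->
  (* conclusion: U is an Abelian group object in coalgebras *)
  exists chi : U -> U,
    is_coalg_map psi eps psi eps chi /\
    (forall u, sigma (tmap id chi (psi u)) = eta (eps u)).
Proof.
move=> coalg sigma_coalg eta_coalg sigmaA sigmaC sigma1 F_good F_basepoint _.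
have F0_eta r := (F_basepoint r).1.
exists (antipode psi eps sigma eta F); split; first split.
- exact: antipode_linear.
- exact: psi_antipode.
- exact: eps_antipode.
- exact: sigma_id_antipode.
Qed.
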